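(* Let $G$ be a tree on $n$ vertices $1,2,\ldots,n$ with edges $e_1,\ldots,e_{n-1}$ and incidence matrix $M$, and let $S=M^TM$ be its signless edge-Laplacian. Then the Moore-Penrose inverse $S^+=[s^+_{i,j}]$ of $S$ is given by $$s^+_{i,j}=\frac{(-1)^{d(e_i,e_j)}}{n}\begin{cases}|G_H(e_i)|\,|G_T(e_i)| & \text{if } e_i=e_j,\\ -|G[e_i,e_j)|\,|G(e_i,e_j]| & \text{if } e_i\neq e_j.\end{cases}$$
   Context: The incidence matrix $M$ is the $n\times(n-1)$ matrix with $(i,j)$-entry $1$ if vertex $i$ is incident with edge $e_j$ and $0$ otherwise. Each edge is written $e_i=\{l_i,m_i\}$ with $l_i<m_i$. The head component $G_H(e_i)$ is the component of $G\setminus e_i$ containing $m_i$ and the tail component $G_T(e_i)$ the one containing $l_i$; $|X|$ is the number of vertices of $X$. For a vertex $j$ and edge $e_i=\{l_i,m_i\}$, $d(j,e_i)=d(e_i,j):=\min\{d(j,l_i),d(j,m_i)\}$ (graph distance), and for edges $d(e_i,e_k):=\min\{d(l_i,e_k),d(m_i,e_k)\}$. For distinct edges $e_i,e_j$, $G\setminus\{e_i,e_j\}$ has three components: $G[e_i,e_j)$ is the component containing an endpoint of $e_i$ but no endpoint of $e_j$, and $G(e_i,e_j]$ is the component containing an endpoint of $e_j$ but no endpoint of $e_i$. The Moore-Penrose inverse of a real matrix $A$ is the unique $A^+$ with $AA^+A=A$, $A^+AA^+=A^+$, $(AA^+)^T=AA^+$, $(A^+A)^T=A^+A$. *)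

From mathcomp Require Import all_boot all_order all_algebra.
Set Implicit Arguments. Unset Strict Implicit. Unset Printing Implicit Defensive.
Import Order.TTheory GRing.Theory Num.Theory.
Local Open Scope ring_scope.

Section Tree.
Variables (n k : nat) (l m : 'I_k -> 'I_n).
(* A graph on vertex set 'I_n with edges e_i = {l i, m i}, i : 'I_k.
   [gadj P] is the adjacency relation of the subgraph keeping only the
   edges i with P i (used for G, G \ e_i, G \ {e_i, e_j}). *)
Definition gadj (P : pred 'I_k) : rel 'I_n := fun x y =>
  [exists i : 'I_k, P i &&
     (((x == l i) && (y == m i)) || ((x == m i) && (y == l i)))].

Definition Gadj : rel 'I_n := gadj predT.

Definition is_tree : Prop :=
  (forall x y, connect Gadj x y) /\
  (forall i, ~~ connect (gadj (predC1 i)) (l i) (m i)).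

Definition dist (x y : 'I_n) : nat :=
  find (fun len => [exists p : len.-tuple 'I_n, path Gadj x p && (last x p == y)])
       (iota 0 n).

Definition dist_ve (x : 'I_n) (i : 'I_k) : nat := minn (dist x (l i)) (dist x (m i)).
Definition dist_ee (i j : 'I_k) : nat := minn (dist_ve (l i) j) (dist_ve (m i) j).

Definition headC (i : 'I_k) : {set 'I_n} := [set v | connect (gadj (predC1 i)) (m i) v].
Definition tailC (i : 'I_k) : {set 'I_n} := [set v | connect (gadj (predC1 i)) (l i) v].

(* G[e_i, e_j): vertices of the component(s) of G \ {e_i, e_j} containing an
   endpoint of e_i but no endpoint of e_j *)
Definition compL (i j : 'I_k) : {set 'I_n} :=
  let r := gadj [pred t | (t != i) && (t != j)] in
  [set v | (connect r (l i) v || connect r (m i) v)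
           && ~~ connect r v (l j) && ~~ connect r v (m j)].

Definition incidence (R : nzRingType) : 'M[R]_(n, k) :=
  \matrix_(v, j) (((v == l j) || (v == m j)) : nat)%:R.

Definition Splus (R : fieldType) : 'M[R]_k :=
  \matrix_(i, j) ((-1) ^+ dist_ee i j / n%:R *
     (if i == j then (#|headC i| * #|tailC i|)%:R
      else - (#|compL i j| * #|compL j i|)%:R)).
End Tree.

Definition is_MP_inverse (R : nzRingType) (p q : nat)
  (A : 'M[R]_(p, q)) (X : 'M[R]_(q, p)) : Prop :=
  [/\ A *m X *m A = A, X *m A *m X = X,
      (A *m X)^T = A *m X & (X *m A)^T = X *m A].

From mathcomp Require Import all_boot all_order all_algebra.
From mathcomp Require Import zify ring.
Set Implicit Arguments. Unset Strict Implicit. Unset Printing Implicit Defensive.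
Import Order.TTheory GRing.Theory Num.Theory.
Local Open Scope ring_scope.

(** Colour the vertices of the tree properly with signs [sgn v = +-1]; the sign
   vector [c] spans the kernel of [M^T]. Let row [e] of [Z] be [sgn v * sgn (m e)]
   times the indicator of the head of [e], centred to be orthogonal to [c].
   Then [Z M = 1], and since [row_mx c M] is square, [M Z = 1 - c c^T / n];
   hence [Z Z^T] is the inverse of [S = M^T M], which is therefore also its
   Moore-Penrose inverse. The entry [(Z Z^T) i j] is a centred count of the
   common vertices of the two heads. For [i != j] the components [G[e_i,e_j)]
   and [G(e_i,e_j]] are disjoint and each head is one of them or its
   complement, which yields [- |G[e_i,e_j)| |G(e_i,e_j]| / n] up to sign; the
   sign is that of [(-1) ^ d(e_i,e_j)] because [d(e_i,e_j)] is the distance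
   between the endpoints of [e_i] and [e_j] facing each other, whose parity
   is read off their colours. *)

Lemma connect_ind (T : finType) (e : rel T) (P : T -> Prop) x y :
  P x -> (forall u w, P u -> e u w -> P w) -> connect e x y -> P y.
Proof.
move=> Px Pe /connectP[p pth ->].
by elim: p x pth Px => [|z p IH] x //= /andP[exz pth] Px; apply: IH pth (Pe _ _ Px exz).
Qed.

Lemma sum_mul_pred2 (R : pzSemiRingType) (T : finType) (F : T -> R) a b : a != b ->
  \sum_v F v * ((v == a) || (v == b) : nat)%:R = F a + F b.
Proof.
move=> ab; rewrite (bigD1 a) //= eqxx mulr1 (bigD1 b) 1?eq_sym //= eqxx orbT mulr1.
by rewrite big1 ?addr0 // => v /andP[/negbTE-> /negbTE->]; rewrite mulr0.
Qed.

Lemma sum_mem_card (R : pzSemiRingType) (T : finType) (A : {set T}) :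
  \sum_v ((v \in A) : nat)%:R = #|A|%:R :> R.
Proof.
rewrite -sum1_card natr_sum [RHS]big_mkcond; apply: eq_bigr => v _.
by case: (v \in A).
Qed.

Lemma natr_cardsC (R : pzRingType) (T : finType) (A : {set T}) :
  #|~: A|%:R = #|T|%:R - #|A|%:R :> R.
Proof. by apply/eqP; rewrite eq_sym subr_eq -natrD addnC cardsC. Qed.

Lemma sum_centered_mem (R : fieldType) (T : finType) (A B : {set T}) :
  (#|T|%:R : R) != 0 ->
  \sum_v (((v \in A) : nat)%:R - #|A|%:R / #|T|%:R)
         * (((v \in B) : nat)%:R - #|B|%:R / #|T|%:R)
    = #|A :&: B|%:R - #|A|%:R * #|B|%:R / #|T|%:R :> R.
Proof.
move=> T_neq0; under eq_bigr do rewrite mulrBl !mulrBr -natrM mulnb -in_setI.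
rewrite !sumrB -!mulr_suml -!mulr_sumr !sum_mem_card sumr_const -mulr_natr.
by field.
Qed.

Lemma cardsI_centered_disjoint (R : fieldType) (T : finType) (A B : {set T})
    (a b : bool) :
  [disjoint A & B] -> (#|T|%:R : R) != 0 ->
  #|(if a then ~: A else A) :&: (if b then ~: B else B)|%:R
    - #|if a then ~: A else A|%:R * #|if b then ~: B else B|%:R / #|T|%:R
    = (-1) ^+ (a (+) b) * - (#|A| * #|B|)%:R / #|T|%:R :> R.
Proof.
move=> /disjoint_setI0 AB T_neq0.
have cardsDR (X Y : {set T}) : X :&: Y = set0 -> #|X :\: Y| = #|X|.
  by move=> XY; rewrite cardsD XY cards0 subn0.
rewrite natrM; case: a; case: b => /=;
  [ rewrite -setCU natr_cardsC cardsU AB cards0 subn0 natrD !natr_cardsC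
  | rewrite setIC -setDE cardsDR 1?setIC // natr_cardsC
  | rewrite -setDE cardsDR // natr_cardsC
  | rewrite AB cards0 ];
  by field.
Qed.

Section LeftInverse.
Variables (R : fieldType) (k : nat) (a : R).
Variables (M : 'M[R]_(k.+1, k)) (Z : 'M[R]_(k, k.+1)) (c : 'cV[R]_k.+1).
Hypotheses (ZM : Z *m M = 1%:M) (Mc : M^T *m c = 0) (Zc : Z *m c = 0).
Hypotheses (ctc : c^T *m c = a%:M) (a_neq0 : a != 0).

Lemma mulmx_left_inverse_proj : M *m Z = 1%:M - a^-1 *: (c *m c^T).
Proof.
pose N : 'M[R]_(k.+1, 1 + k) := row_mx c M.
pose L : 'M[R]_(1 + k, k.+1) := col_mx (a^-1 *: c^T) Z.
have cM : c^T *m M = 0 by rewrite -[c^T *m M]trmxK trmx_mul trmxK Mc trmx0.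
(* [L] is a left, hence also a right, inverse of the square matrix [N]. *)
have LN : L *m N = 1%:M.
  rewrite mul_col_row -!scalemxAl ctc Zc ZM cM scaler0 scale_scalar_mx mulVf //.
  by rewrite [RHS]scalar_mx_block.
have := mulmx1C LN; rewrite mul_row_col scalemxAr => NL.
by rewrite -NL addrAC subrr add0r.
Qed.

Lemma gram_mulmx_left_inverse : (M^T *m M) *m (Z *m Z^T) = 1%:M.
Proof.
rewrite -mulmxA (mulmxA M) mulmx_left_inverse_proj mulmxBl mul1mx mulmxBr.
rewrite -scalemxAl -scalemxAr !mulmxA Mc !mul0mx scaler0 subr0.
by rewrite -trmx_mul ZM trmx1.
Qed.

End LeftInverse.

Lemma is_MP_inverse_mulmx1 (R : comUnitRingType) p (A X : 'M[R]_p) :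
  A *m X = 1%:M -> is_MP_inverse A X.
Proof.
move=> AX; have XA := mulmx1C AX.
by split; rewrite ?AX ?XA ?mul1mx ?trmx1.
Qed.

Section Tree.
Variables (n k : nat) (l m : 'I_k -> 'I_n).
Hypothesis tree : is_tree l m.

Local Notation Gdel i := (gadj l m (predC1 i)).
Local Notation Gdel2 i j := (gadj l m [pred t | (t != i) && (t != j)]).

Definition edge j (u w : 'I_n) :=
  ((u == l j) && (w == m j)) || ((u == m j) && (w == l j)).
Definition endp j (x : 'I_n) := (x == l j) || (x == m j).

Lemma gadjP (P : pred 'I_k) u w :
  reflect (exists2 j, P j & edge j u w) (gadj l m P u w).
Proof.
apply: (iffP existsP) => [[j /andP[Pj e]] | [j Pj e]]; exists j => //.
by rewrite Pj.
Qed.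

Lemma edge_lm j : edge j (l j) (m j).
Proof. by rewrite /edge !eqxx. Qed.

Lemma edge_endp j u w : edge j u w -> endp j u && endp j w.
Proof. by case/orP=> /andP[/eqP-> /eqP->]; rewrite /endp !eqxx ?orbT. Qed.

Lemma l_neq_m j : l j != m j.
Proof. by apply: contraNneq (tree.2 j) => ->; apply: connect0. Qed.

Lemma gadj_sym P : symmetric (gadj l m P).
Proof.
move=> u w; apply/gadjP/gadjP => -[j Pj e]; exists j => //;
  by case/orP: e => /andP[/eqP-> /eqP->]; rewrite /edge !eqxx ?orbT.
Qed.

Lemma connect_gadj_sym P : connect_sym (gadj l m P).
Proof. exact/sym_connect_sym/gadj_sym. Qed.

Lemma connect_gadj_sub (P Q : pred 'I_k) :
  subpred P Q -> subrel (connect (gadj l m P)) (connect (gadj l m Q)).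
Proof.
move=> PQ; apply: connect_sub => u w /gadjP[j /PQ Qj e].
by apply: connect1; apply/gadjP; exists j.
Qed.

Definition side i v := v \in headC l m i.

Lemma side_connect i u w : connect (Gdel i) u w -> side i u = side i w.
Proof.
rewrite /side !inE => cuw; apply/idP/idP => [cu | cw]; first exact: connect_trans cu cuw.
by apply: connect_trans cw _; rewrite connect_gadj_sym.
Qed.

Lemma side_m i : side i (m i).
Proof. by rewrite /side inE connect0. Qed.

Lemma side_l i : side i (l i) = false.
Proof. by rewrite /side inE connect_gadj_sym; apply/negbTE/tree.2. Qed.

Lemma side_step i j u w : edge j u w -> side i w = (j == i) (+) side i u.
Proof.
case: (eqVneq j i) => [-> | ji] e.
  by case/orP: e => /andP[/eqP-> /eqP->]; rewrite side_m side_l.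
have cuw : connect (Gdel i) u w by apply: connect1; apply/gadjP; exists j.
by rewrite (side_connect cuw).
Qed.

Lemma side_m_l i j : j != i -> side i (m j) = side i (l j).
Proof. by move=> ji; rewrite (side_step i (edge_lm j)) (negbTE ji). Qed.

Lemma side_endp i j v : j != i -> endp j v -> side i v = side i (l j).
Proof. by move=> ji /orP[] /eqP-> //; rewrite side_m_l. Qed.

Lemma endp_side_inj i x z : endp i x -> endp i z -> side i x = side i z -> x = z.
Proof. by case/orP=> /eqP->; case/orP=> /eqP->; rewrite ?side_l ?side_m. Qed.

Definition end_on i (b : bool) := if b then m i else l i.

Lemma endp_end_on i b : endp i (end_on i b).
Proof. by case: b; rewrite /endp eqxx ?orbT. Qed.

Lemma side_end_on i b : side i (end_on i b) = b.
Proof. by case: b; rewrite ?side_m ?side_l. Qed.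

Lemma connect_end_on i v : connect (Gdel i) (end_on i (side i v)) v.
Proof.
rewrite /end_on; have [sv | sv] := ifPn; first by rewrite /side inE in sv.
apply: (connect_ind (P := fun w => ~~ side i w -> connect (Gdel i) (l i) w))
  _ _ (tree.1 (l i) v) sv => [|u w IHu /gadjP[j _ e] sw]; first by rewrite connect0.
case: (eqVneq j i) => [ji | ji].
  have /andP[_ ew] := edge_endp e; rewrite ji in ew.
  by rewrite (endp_side_inj ew (endp_end_on i false)) ?connect0 ?side_end_on ?(negbTE sw).
have su : ~~ side i u by rewrite (side_step i e) (negbTE ji) in sw.
by apply: connect_trans (IHu su) (connect1 _); apply/gadjP; exists j.
Qed.

Lemma same_side_connect i u w : side i u = side i w -> connect (Gdel i) u w.
Proof.
move=> suw; apply: (connect_trans _ (connect_end_on i w)).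
by rewrite -suw connect_gadj_sym connect_end_on.
Qed.

Lemma tailC_eq i : tailC l m i = ~: headC l m i.
Proof.
apply/setP => v; rewrite in_setC -[v \in headC l m i]/(side i v) inE.
apply/idP/idP => [/side_connect <- | sv]; first by rewrite side_l.
by apply: same_side_connect; rewrite side_l (negbTE sv).
Qed.

(* Adjacent vertices differ in exactly one head membership, so this is a
   proper 2-colouring. *)
Definition colour v := odd #|[set i | side i v]|.

Lemma colour_step j u w : edge j u w -> colour w = ~~ colour u.
Proof.
move=> e; rewrite /colour (cardsD1 j) [in RHS](cardsD1 j).
have -> : [set i | side i w] :\ j = [set i | side i u] :\ j.
  apply/setP => i; rewrite !inE; case: (eqVneq i j) => //= ij.
  by rewrite (side_step i e) eq_sym (negbTE ij).
by rewrite !inE (side_step j e) eqxx !oddD; case: (side j u); rewrite /= ?negbK.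
Qed.

Definition walk x y (p : seq 'I_n) := path (Gadj l m) x p && (last x p == y).

Lemma walk_nil x y : walk x y [::] = (x == y).
Proof. by []. Qed.

Lemma walk_cons x y z p : walk x y (z :: p) = Gadj l m x z && walk z y p.
Proof. by rewrite /walk /= andbA. Qed.

Lemma walk_rev x y p : walk x y p -> walk y x (rev (belast x p)).
Proof.
case/andP=> pth /eqP <-; apply/andP; split.
  by rewrite rev_path (eq_path (fun u w => gadj_sym predT w u)).
by rewrite -(last_cons x) -rev_rcons -lastI rev_cons last_rcons.
Qed.

Lemma colour_walk x y p : walk x y p -> colour y = colour x (+) odd (size p).
Proof.
elim: p x => [|z p IH] x; first by rewrite walk_nil => /eqP->; rewrite addbF.
rewrite walk_cons => /andP[/gadjP[j _ e] wp].
by rewrite (IH _ wp) (colour_step e) /= addbN addNb.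
Qed.

Definition walk_len x y len := [exists p : len.-tuple 'I_n, walk x y p].

Lemma walk_lenP x y p : walk x y p -> walk_len x y (size p).
Proof. by move=> w; apply/existsP; exists (in_tuple p). Qed.

Lemma has_walk_len x y : has (walk_len x y) (iota 0 n).
Proof.
have /connectP[p pth lp] := tree.1 x y.
case: (shortenP pth) lp => p' pth' up' _ lp'.
apply/hasP; exists (size p'); last by apply: walk_lenP; rewrite /walk pth' lp' eqxx.
rewrite mem_iota /= add0n.
by have := max_card (mem (x :: p')); rewrite (card_uniqP up') card_ord.
Qed.

Lemma dist_walk x y : exists2 p, walk x y p & size p = dist l m x y.
Proof.
have has_w := has_walk_len x y.
have := nth_find 0 has_w; rewrite has_find size_iota in has_w.
by rewrite nth_iota // add0n => /existsP[p w]; exists p; rewrite ?size_tuple.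
Qed.

Lemma dist_le x y p : walk x y p -> (dist l m x y <= size p)%N.
Proof.
move=> w; rewrite /dist -/(walk_len x y).
case: (ltnP (size p) n) => sp.
  rewrite leqNgt; apply/negP => lt_p.
  by have := before_find 0 lt_p; rewrite nth_iota // add0n walk_lenP.
have := has_walk_len x y; rewrite has_find size_iota => lt_n.
exact: leq_trans (ltnW lt_n) sp.
Qed.

Lemma dist_sym x y : dist l m x y = dist l m y x.
Proof.
suff le_dist u w : (dist l m u w <= dist l m w u)%N.
  by apply/eqP; rewrite eqn_leq !le_dist.
have [p wp <-] := dist_walk w u.
by rewrite -(size_belast w p) -size_rev dist_le // walk_rev.
Qed.

Lemma dist_xx x : dist l m x x = 0%N.
Proof. by apply/eqP; rewrite -leqn0 (@dist_le x x [::]) // /walk /=. Qed.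

Lemma odd_dist x y : odd (dist l m x y) = colour x (+) colour y.
Proof. by have [p w <-] := dist_walk x y; rewrite (colour_walk w) addbA addbb. Qed.

Lemma walk_shortcut i x w p u : endp i x -> side i x = side i w ->
  walk u w p -> side i u != side i w -> exists2 q, walk x w q & (size q < size p)%N.
Proof.
(* The walk must cross [e_i], and it is at [x] right after its first crossing. *)
move=> ex sxw; elim: p u => [|z p IH] u.
  by rewrite walk_nil => /eqP->; rewrite eqxx.
rewrite walk_cons => /andP[/gadjP[j _ e] wp] suw.
case: (eqVneq (side i z) (side i w)) => szw; last first.
  by have [q wq sq] := IH z wp szw; exists q => //; rewrite ltnS ltnW.
have ji : j = i.
  by apply/eqP; apply: contraNT suw => ji; rewrite -szw (side_step i e) (negbTE ji).
have /andP[_ ez] := edge_endp e; rewrite ji in ez.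
by rewrite (endp_side_inj ex ez) ?sxw ?szw //; exists p.
Qed.

Lemma dist_end_on_lt i b w : side i w = b ->
  (dist l m (end_on i b) w < dist l m (end_on i (~~ b)) w)%N.
Proof.
move=> sw; have [p wp <-] := dist_walk (end_on i (~~ b)) w.
have sx : side i (end_on i b) = side i w by rewrite side_end_on sw.
have su : side i (end_on i (~~ b)) != side i w by rewrite side_end_on sw; case: (b).
have [q wq sq] := walk_shortcut (endp_end_on i b) sx wp su.
exact: leq_ltn_trans (dist_le wq) sq.
Qed.

Lemma dist_ee_end_on i j : j != i ->
  dist_ee l m i j = dist l m (end_on i (side i (l j))) (end_on j (side j (l i))).
Proof.
move=> ji; have ij : i != j by rewrite eq_sym.
set x := end_on i _; set y := end_on j _.
have f1 := dist_end_on_lt (side_endp ji (endp_end_on j (side j (l i)))).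
have f2 := dist_end_on_lt (side_endp ij (endp_end_on i (side i (l j)))).
have f3 := dist_end_on_lt (side_endp ji (endp_end_on j (~~ side j (l i)))).
rewrite -/x -/y dist_sym [dist l m _ x]dist_sym in f2.
move: f1 f2 f3; rewrite /dist_ee /dist_ve /x /y /end_on.
by case: (side i (l j)); case: (side j (l i)) => /= f1 f2 f3; lia.
Qed.

Lemma connect_avoid i j x v : j != i -> side i x != side i (l j) ->
  connect (Gdel i) x v -> connect (Gdel2 i j) x v.
Proof.
move=> ji sx cxv.
suff [] : connect (Gdel2 i j) x v /\ side i v = side i x by [].
apply: (connect_ind (P := fun w => connect (Gdel2 i j) x w /\ side i w = side i x))
  _ _ cxv; first by split; first exact: connect0.
move=> u w [cu su] /gadjP[e /= ei he].
have swu : side i w = side i u by rewrite (side_step i he) (negbTE ei).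
split; last by rewrite swu.
apply: connect_trans cu (connect1 _); apply/gadjP; exists e => //=; rewrite ei /=.
apply: contraNneq sx => ej; have /andP[eu _] := edge_endp he; rewrite ej in eu.
by rewrite -su (side_endp ji eu).
Qed.

Lemma connect_reach i j z w : connect (Gdel i) z w -> endp j w ->
  exists2 y, endp j y & connect (Gdel2 i j) z y.
Proof.
move=> czw ew.
pose reach := exists2 y, endp j y & connect (Gdel2 i j) z y.
suff : connect (Gdel2 i j) z w \/ reach by case=> [czw' | //]; exists w.
apply: (connect_ind (P := fun w => connect (Gdel2 i j) z w \/ reach) _ _ czw).
  by left; exact: connect0.
move=> u v [cu | r] /gadjP[e /= ei he]; last by right.
case: (eqVneq e j) => [ej | ej].
  by right; exists u => //; have /andP[+ _] := edge_endp he; rewrite ej.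
by left; apply: connect_trans cu (connect1 _); apply/gadjP; exists e; rewrite //= ei.
Qed.

Lemma compL_eq i j : j != i -> compL l m i j = [set v | side i v != side i (l j)].
Proof.
move=> ji; apply/setP => v; rewrite !inE.
have del2_sub x y : connect (Gdel2 i j) x y -> connect (Gdel i) x y.
  by apply: connect_gadj_sub => t /andP[].
apply/idP/idP => [|svl].
  case/andP=> /andP[ce nl] nm; apply/negP => /eqP svl.
  have [x ex cxv] : exists2 x, endp i x & connect (Gdel2 i j) x v.
    by case/orP: ce => c; [exists (l i) | exists (m i)]; rewrite /endp ?eqxx ?orbT.
  have cxl : connect (Gdel i) x (l j).
    by apply: same_side_connect; rewrite (side_connect (del2_sub _ _ cxv)) svl.
  have [y ey cxy] := connect_reach cxl (endp_end_on j false).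
  have cvy : connect (Gdel2 i j) v y.
    by apply: connect_trans cxy; rewrite connect_gadj_sym.
  by case/orP: ey => /eqP eyj; [move: nl | move: nm]; rewrite -eyj cvy.
have sx : side i (end_on i (side i v)) != side i (l j) by rewrite side_end_on.
have crv := connect_avoid ji sx (connect_end_on i v).
rewrite -andbA; apply/and3P; split.
- by move: crv; rewrite /end_on; case: (side i v) => ->; rewrite ?orbT.
- by apply: contra svl => /del2_sub /side_connect ->.
- apply: contra svl => /del2_sub /side_connect ->.
  by rewrite side_m_l.
Qed.

Lemma compL_disjoint i j : j != i -> [disjoint compL l m i j & compL l m j i].
Proof.
move=> ji; have ij : i != j by rewrite eq_sym.
rewrite compL_eq // compL_eq // -setI_eq0; apply/eqP/setP => v; rewrite !inE.
apply/negP => /andP[svi svj].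
have sx : side i (end_on i (side i v)) != side i (l j) by rewrite side_end_on.
have cxv : connect (gadj l m (predC1 j)) (end_on i (side i v)) v.
  by apply: connect_gadj_sub (connect_avoid ji sx (connect_end_on i v)) => t /andP[].
move: svj; rewrite -(side_connect cxv) (side_endp ij (endp_end_on i _)).
by rewrite eqxx.
Qed.

Lemma headC_compL i j : j != i ->
  headC l m i = if side i (l j) then ~: compL l m i j else compL l m i j.
Proof.
move=> ji; rewrite compL_eq //; apply/setP => v.
rewrite -[v \in headC l m i]/(side i v).
by case: (side i (l j)); rewrite !inE; case: (side i v).
Qed.

Section SignedHeads.
Variable R : fieldType.
Hypothesis n_neq0 : n%:R != 0 :> R.

Definition sgn v : R := (-1) ^+ colour v.
Definition sign_col : 'cV[R]_n := \col_v sgn v.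

Definition head_mx : 'M[R]_(k, n) :=
  \matrix_(e, v) (sgn v * sgn (m e) * ((side e v)%:R - #|headC l m e|%:R / n%:R)).

Lemma sgnK v : sgn v * sgn v = 1.
Proof. by rewrite -signr_addb addbb. Qed.

Lemma sgn_l j : sgn (l j) = - sgn (m j).
Proof. by rewrite /sgn (colour_step (edge_lm j)) signrN opprK. Qed.

Lemma sgn_end_on i b : sgn (end_on i b) = (-1) ^+ (~~ b) * sgn (m i).
Proof. by case: b; rewrite /= ?expr0 ?mul1r ?expr1 ?mulN1r ?sgn_l. Qed.

Lemma sign_dist x y : (-1) ^+ dist l m x y = sgn x * sgn y.
Proof. by rewrite -signr_odd odd_dist signr_addb. Qed.

Lemma head_mx_incidence : head_mx *m incidence l m R = 1%:M.
Proof.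
apply/matrixP => e f; rewrite !mxE.
under eq_bigr do rewrite !mxE.
rewrite sum_mul_pred2 ?l_neq_m // sgn_l.
case: (eqVneq e f) => [<- | ef]; first by rewrite side_l side_m /= mulNr sgnK; ring.
by rewrite side_m_l 1?eq_sym //=; ring.
Qed.

Lemma incidence_sign : (incidence l m R)^T *m sign_col = 0.
Proof.
apply/matrixP => f z; rewrite !mxE.
under eq_bigr do rewrite !mxE mulrC.
by rewrite sum_mul_pred2 ?l_neq_m // sgn_l addNr.
Qed.

Lemma head_mx_sign : head_mx *m sign_col = 0.
Proof.
apply/matrixP => e z; rewrite !mxE.
under eq_bigr do rewrite !mxE mulrC !mulrA sgnK mul1r.
rewrite -mulr_sumr sumrB sum_mem_card sumr_const card_ord.
by rewrite -[_ *+ n]mulr_natr divfK // subrr mulr0.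
Qed.

Lemma sign_col_norm : sign_col^T *m sign_col = n%:R%:M.
Proof.
apply/matrixP => a b; rewrite !ord1 !mxE eqxx /=.
under eq_bigr do rewrite !mxE sgnK.
by rewrite sumr_const card_ord.
Qed.

Lemma head_mx_gram i j : (head_mx *m head_mx^T) i j = sgn (m i) * sgn (m j) *
  (#|headC l m i :&: headC l m j|%:R - #|headC l m i|%:R * #|headC l m j|%:R / n%:R).
Proof.
have entry v : head_mx i v * head_mx^T v j = sgn (m i) * sgn (m j) *
    (((side i v)%:R - #|headC l m i|%:R / n%:R)
     * ((side j v)%:R - #|headC l m j|%:R / n%:R)).
  by rewrite !mxE -[RHS]mul1r -(sgnK v); ring.
rewrite mxE; under eq_bigr do rewrite entry.
rewrite -mulr_sumr; congr (_ * _).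
by have := @sum_centered_mem R _ (headC l m i) (headC l m j); rewrite card_ord => ->.
Qed.

Lemma Splus_head_mx : Splus l m R = head_mx *m head_mx^T.
Proof.
apply/matrixP => i j; rewrite head_mx_gram mxE.
case: (eqVneq i j) => [<- | ij].
  rewrite /dist_ee /dist_ve dist_xx !min0n expr0 setIid tailC_eq natrM natr_cardsC.
  by rewrite card_ord sgnK; field.
have ji : j != i by rewrite eq_sym.
have := cardsI_centered_disjoint (R := R) (side i (l j)) (side j (l i))
  (compL_disjoint ji).
rewrite card_ord => /(_ n_neq0) cov.
rewrite (headC_compL ji) (headC_compL ij) cov dist_ee_end_on // sign_dist.
by rewrite !sgn_end_on !signrN signr_addb; field.
Qed.

End SignedHeads.

End Tree.

Theorem mainTheorem4 (R : realFieldType) (n : nat) (l m : 'I_n.-1 -> 'I_n)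
  (Hn : (0 < n)%N) (Hlm : forall i, (l i < m i)%N) (Htree : is_tree l m) :
  let M := @incidence n n.-1 l m R in
  let S := M^T *m M in
  is_MP_inverse S (@Splus n n.-1 l m R).
Proof.
move: l m Hlm Htree; case: n Hn => // k _ l m _ tree M S.
have n_neq0 : k.+1%:R != 0 :> R by rewrite pnatr_eq0.
apply: is_MP_inverse_mulmx1; rewrite (Splus_head_mx tree n_neq0).
exact: (gram_mulmx_left_inverse (head_mx_incidence tree R) (incidence_sign tree R)
  (head_mx_sign l m n_neq0) (sign_col_norm l m R) n_neq0).
Qed.
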